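(* Let $M$ be a smooth $n$-manifold with a torsion-free linear connection $\nabla$ and a symmetric $(0,2)$-tensor field $c$, and let $\overline{g}_{\nabla,c}$ be the modified Riemannian extension on $T^{\ast}M$. Let $\widetilde{\nabla}$ be the unique linear connection on $T^{\ast}M$ satisfying $\widetilde{\nabla}\,\overline{g}_{\nabla,c}=0$ whose torsion $\widetilde{T}$ is given in the adapted frame by $\widetilde{T}(E_i,E_j)=-p_sR_{ijr}^{\ \ \ s}E_{\overline{r}}$ and $\widetilde{T}(E_i,E_{\overline{j}})=\widetilde{T}(E_{\overline{i}},E_j)=\widetilde{T}(E_{\overline{i}},E_{\overline{j}})=0$. Then, with respect to the adapted frame, $$\widetilde{\nabla}_{E_{\overline{i}}}E_{\overline{j}}=0,\quad \widetilde{\nabla}_{E_{\overline{i}}}E_{j}=0,\quad \widetilde{\nabla}_{E_{i}}E_{\overline{j}}=-\Gamma^{j}_{ih}E_{\overline{h}},$$ $$\widetilde{\nabla}_{E_{i}}E_{j}=\Gamma^{h}_{ij}E_{h}+\tfrac12\left(\nabla_i c_{jh}+\nabla_j c_{ih}-\nabla_h c_{ij}\right)E_{\overline{h}}.$$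
   Context: Summation convention; indices $h,i,j,\dots$ range over $1,\dots,n$ and $\overline{i}=n+i$. $\Gamma^h_{ij}$ are the coefficients of $\nabla$ in local coordinates $(x^i)$ on $M$, i.e. $\nabla_{\partial_i}\partial_j=\Gamma^h_{ij}\partial_h$. The curvature is $R(X,Y)Z=\nabla_X\nabla_YZ-\nabla_Y\nabla_XZ-\nabla_{[X,Y]}Z$ with $R(\partial_i,\partial_j)\partial_k=R_{ijk}^{\ \ \ h}\partial_h$. $c_{ij}$ are the components of $c$ and $\nabla_ic_{jk}$ those of $\nabla c$. On $T^{\ast}M$ use induced coordinates $(x^i,p_i)$, where $p_i$ are the components of a covector with respect to $dx^i$; write $\partial_{\overline{i}}=\partial/\partial p_i$. The adapted frame is $E_j=\partial_j+p_a\Gamma^a_{hj}\partial_{\overline{h}}$, $E_{\overline{j}}=\partial_{\overline{j}}$. The modified Riemannian extension $\overline{g}_{\nabla,c}$ is the pseudo-Riemannian metric on $T^{\ast}M$ given by $\overline{g}_{\nabla,c}(E_i,E_j)=c_{ij}$, $\overline{g}_{\nabla,c}(E_i,E_{\overline{j}})=\overline{g}_{\nabla,c}(E_{\overline{j}},E_i)=\delta_i^j$, $\overline{g}_{\nabla,c}(E_{\overline{i}},E_{\overline{j}})=0$. (A metric linear connection with prescribed torsion is unique.) *)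

(* Local-coordinate formalization over a chart U of M. *)
From HB Require Import structures.
From mathcomp Require Import all_boot all_order all_algebra.
From mathcomp Require Import all_classical all_reals all_analysis.
Set Implicit Arguments. Unset Strict Implicit. Unset Printing Implicit Defensive.
Import Order.TTheory GRing.Theory Num.Theory.
Import numFieldNormedType.Exports.
Local Open Scope classical_set_scope.
Local Open Scope ring_scope.

Section Defs.
Variables (R : realType) (n : nat).

(* A point of T*M over the chart: (x, p), x = coordinates on M, p = fibre coords. *)
Definition pt := ('rV[R]_n * 'rV[R]_n)%type.

Fixpoint smooth_k {V : normedModType R} (k : nat) (f : V -> R) (A : set V) : Prop :=
  match k with
  | 0 => forall x, A x -> differentiable f x
  | k.+1 => (forall x, A x -> differentiable f x) /\
            forall v : V, smooth_k k (fun y => 'D_v f y) A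
  end.
Definition smooth_on {V : normedModType R} (f : V -> R) (A : set V) :=
  forall k, smooth_k k f A.

Definition dM (i : 'I_n) (f : 'rV[R]_n -> R) (x : 'rV[R]_n) : R :=
  'D_(delta_mx 0 i) f x.

(* coordinate index on T*M: inl i = x^i (d_i), inr i = p_i (d_{bar i}) *)
Definition idx := ('I_n + 'I_n)%type.

Definition dcoord (K : idx) (F : pt -> R) (z : pt) : R :=
  match K with
  | inl i => 'D_((delta_mx 0 i : 'rV[R]_n), (0 : 'rV[R]_n)) F z
  | inr i => 'D_((0 : 'rV[R]_n), (delta_mx 0 i : 'rV[R]_n)) F z
  end.

(* vector fields on T*M by their coordinate components *)
Definition vfield := idx -> pt -> R.
Definition act (X : vfield) (F : pt -> R) (z : pt) : R :=
  \sum_(K : idx) X K z * dcoord K F z.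
Definition bracket (X Y : vfield) : vfield :=
  fun K z => act X (Y K) z - act Y (X K) z.

(* Gam h i j x = Gamma^h_{ij}(x) *)
(* adapted frame: E (inl j) = E_j = d_j + p_a Gamma^a_{hj} d_{bar h}; E (inr j) = d_{bar j} *)
Definition frame (Gam : 'I_n -> 'I_n -> 'I_n -> 'rV[R]_n -> R) (A : idx) : vfield :=
  fun K z =>
  match A, K with
  | inl j, inl k => (j == k)%:R
  | inl j, inr h => \sum_(a < n) z.2 0 a * Gam a h j z.1
  | inr j, inl k => 0
  | inr j, inr h => (j == h)%:R
  end.

(* curvature components R_{ijk}^h of nabla (R(d_i,d_j)d_k = R_{ijk}^h d_h) *)
Definition curv (Gam : 'I_n -> 'I_n -> 'I_n -> 'rV[R]_n -> R)
  (i j k h : 'I_n) (x : 'rV[R]_n) : R :=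
  dM i (Gam h j k) x - dM j (Gam h i k) x
  + \sum_(a < n) (Gam h i a x * Gam a j k x - Gam h j a x * Gam a i k x).

(* components nabla_i c_{jk} of nabla c *)
Definition nabla_c (Gam : 'I_n -> 'I_n -> 'I_n -> 'rV[R]_n -> R)
  (c : 'I_n -> 'I_n -> 'rV[R]_n -> R) (i j k : 'I_n) (x : 'rV[R]_n) : R :=
  dM i (c j k) x - \sum_(h < n) Gam h i j x * c h k x
                 - \sum_(h < n) Gam h i k x * c j h x.

(* modified Riemannian extension in the adapted frame *)
Definition gbar (c : 'I_n -> 'I_n -> 'rV[R]_n -> R) (A B : idx) (z : pt) : R :=
  match A, B with
  | inl i, inl j => c i j z.1
  | inl i, inr j => (i == j)%:R
  | inr i, inl j => (i == j)%:R
  | inr i, inr j => 0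
  end.

(* A connection on T*M over the chart, given by its coefficients in the adapted
   frame: nabla~_{E_A} E_B = sum_D Ct A B D E_D. *)
Definition conn_vf (Gam : 'I_n -> 'I_n -> 'I_n -> 'rV[R]_n -> R)
  (Ct : idx -> idx -> idx -> pt -> R) (A B : idx) : vfield :=
  fun K z => \sum_(D : idx) Ct A B D z * frame Gam D K z.

Definition metric_compat Gam c (Ct : idx -> idx -> idx -> pt -> R) (z : pt) :=
  forall A B C : idx,
    act (frame Gam A) (gbar c B C) z
    - \sum_(D : idx) Ct A B D z * gbar c D C z
    - \sum_(D : idx) Ct A C D z * gbar c B D z = 0.

Definition torsion Gam (Ct : idx -> idx -> idx -> pt -> R) (A B : idx) : vfield :=
  fun K z => conn_vf Gam Ct A B K z - conn_vf Gam Ct B A K z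
             - bracket (frame Gam A) (frame Gam B) K z.

Definition presc_torsion Gam (A B : idx) : vfield :=
  fun K z =>
  match A, B with
  | inl i, inl j =>
      \sum_(r < n) (- \sum_(s < n) z.2 0 s * curv Gam i j r s z.1) * frame Gam (inr r) K z
  | _, _ => 0
  end.

End Defs.

From HB Require Import structures.
From mathcomp Require Import all_boot all_order all_algebra.
From mathcomp Require Import all_classical all_reals all_analysis.
From mathcomp Require Import ring lra.
Set Implicit Arguments. Unset Strict Implicit. Unset Printing Implicit Defensive.
Import Order.TTheory GRing.Theory Num.Theory.
Import numFieldNormedType.Exports.
Local Open Scope classical_set_scope.
Local Open Scope ring_scope.

(* In the adapted frame the connection is encoded by its lowered coefficients
   L(A,B,C) = g(nabla~_{E_A} E_B, E_C).  Metric compatibility gives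
   L(A,B,C) + L(A,C,B) = E_A(g(E_B,E_C)), a derivative of c or zero since g is
   constant on the other frame pairs; the torsion condition gives
   L(A,B,C) - L(B,A,C) = g([E_A,E_B] + T~(E_A,E_B), E_C).  The bracket of two
   horizontal fields E_i, E_j is the vertical curvature field
   p_s R_{ijr}^s E_{bar r}, which the prescribed torsion cancels exactly, so this
   last term only involves the Christoffel symbols.  The Koszul formula then
   determines L, and undoing the lowering (g(E_{bar r}, E_h) = delta,
   g(E_i, E_h) = c_ih) gives the claim. *)

Lemma sum_delta_l (S : pzSemiRingType) (I : finType) (i : I) (F : I -> S) :
  \sum_(k : I) (i == k)%:R * F k = F i.
Proof.
rewrite (bigD1 i) //= eqxx mul1r big1 ?addr0 // => k /negPf.
by rewrite eq_sym => ->; rewrite mul0r.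
Qed.

Lemma sum_delta_r (S : pzSemiRingType) (I : finType) (i : I) (F : I -> S) :
  \sum_(k : I) F k * (k == i)%:R = F i.
Proof.
rewrite -[RHS](sum_delta_l i); apply: eq_bigr => k _.
by rewrite eq_sym; case: (i == k); rewrite ?mulr1 ?mul1r ?mulr0 ?mul0r.
Qed.

Lemma koszul_formula (F : fieldType) (I : Type) (L e S : I -> I -> I -> F) :
  (2 : F) != 0 ->
  (forall A B C, L A B C + L A C B = e A B C) ->
  (forall A B C, L A B C - L B A C = S A B C) ->
  forall A B C, L A B C =
    2^-1 * (e A B C + e B A C - e C B A + S A B C - S B C A + S C A B).
Proof. by move=> two_neq0 sym skew A B C; rewrite -!sym -!skew; field. Qed.

Lemma derive_line_congr (R : numFieldType) (U W : normedModType R)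
    (f g : U -> W) (a v : U) :
  (forall h : R, f (h *: v + a) - f a = g (h *: v + a) - g a) ->
  'D_v f a = 'D_v g a.
Proof.
move=> fg; rewrite /derive.
suff -> : (fun h => h^-1 *: (f (h *: v + a) - f a)) =
  (fun h => h^-1 *: (g (h *: v + a) - g a)) by [].
by apply: funext => h; rewrite fg.
Qed.

Section ProductDerivatives.
Variables (R : numFieldType) (U V W : normedModType R).

Lemma derive_fst (G : U -> W) (z : U * V) (v : U) :
  'D_((v, 0) : U * V) (fun y => G y.1) z = 'D_v G z.1.
Proof. by []. Qed.

Lemma derive_fst_vertical (G : U -> W) (z : U * V) (w : V) :
  'D_((0, w) : U * V) (fun y => G y.1) z = 0.
Proof.
rewrite -(derive_cst (G z.1) z ((0, w) : U * V)).
by apply: derive_line_congr => h /=; rewrite scaler0 add0r !subrr.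
Qed.

End ProductDerivatives.

Section FibreLinearDerivatives.
Variables (R : realType) (n : nat) (G : 'I_n -> 'rV[R]_n -> R).

Definition fibre_linear (z : pt R n) : R := \sum_(a < n) z.2 0 a * G a z.1.

Lemma derive_fibre_linear_horizontal (z : pt R n) (v : 'rV[R]_n) :
  (forall a, derivable (G a) z.1 v) ->
  'D_((v, 0) : pt R n) fibre_linear z = \sum_(a < n) z.2 0 a * 'D_v (G a) z.1.
Proof.
move=> dG.
rewrite (derive_line_congr (g := fun y : pt R n => \sum_(a < n) z.2 0 a * G a y.1));
  last by move=> h; rewrite /fibre_linear /= scaler0 add0r.
rewrite (derive_fst (fun x => \sum_(a < n) z.2 0 a * G a x)) -fct_sumE derive_sum;
  last by move=> a; exact: derivableZ.
by apply: eq_bigr => a _; rewrite deriveMl.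
Qed.

Lemma derive_fibre_linear_vertical (z : pt R n) (m : 'I_n) :
  'D_((0, delta_mx 0 m) : pt R n) fibre_linear z = G m z.1.
Proof.
rewrite /derive; apply: cvg_lim => //.
apply: cvg_trans (cvg_cst (G m z.1)).
apply: near_eq_cvg; near=> h.
have h_neq0 : h != 0 by near: h; exact: nbhs_dnbhs_neq.
rewrite /fibre_linear /= scaler0 add0r -sumrB.
rewrite (eq_bigr (fun a => h * ((m == a)%:R * G a z.1))); last first.
  by move=> a _; rewrite !mxE eqxx /= eq_sym mulrDl addrK mulrA.
by rewrite -mulr_sumr sum_delta_l [_ *: _]mulrA mulVf // mul1r.
Unshelve. all: try by end_near. all: exact: Proper_dnbhs_numFieldType.
Qed.

End FibreLinearDerivatives.

Lemma nabla_c_koszul_combination (R : realType) (n : nat)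
    (Gam : 'I_n -> 'I_n -> 'I_n -> 'rV[R]_n -> R)
    (c : 'I_n -> 'I_n -> 'rV[R]_n -> R) (x : 'rV[R]_n) (i j h : 'I_n) :
  (forall h i j, Gam h i j x = Gam h j i x) ->
  (forall i j, c i j x = c j i x) ->
  2^-1 * (nabla_c Gam c i j h x + nabla_c Gam c j i h x - nabla_c Gam c h i j x) =
  2^-1 * (dM i (c j h) x + dM j (c i h) x - dM h (c i j) x)
    - \sum_(k < n) Gam k i j x * c k h x.
Proof.
move=> Gam_sym c_sym.
have sum_ji : \sum_(k < n) Gam k j i x * c k h x = \sum_(k < n) Gam k i j x * c k h x.
  by apply: eq_bigr => k _; rewrite Gam_sym.
have sum_hi : \sum_(k < n) Gam k h i x * c k j x = \sum_(k < n) Gam k i h x * c j k x.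
  by apply: eq_bigr => k _; rewrite Gam_sym c_sym.
have sum_hj : \sum_(k < n) Gam k h j x * c i k x = \sum_(k < n) Gam k j h x * c i k x.
  by apply: eq_bigr => k _; rewrite Gam_sym.
rewrite /nabla_c sum_ji sum_hi sum_hj; lra.
Qed.

Section AdaptedFrame.
Variables (R : realType) (n : nat).
Variables (Gam : 'I_n -> 'I_n -> 'I_n -> 'rV[R]_n -> R)
  (c : 'I_n -> 'I_n -> 'rV[R]_n -> R) (z : pt R n).

Lemma act_split (X : vfield R n) (F : pt R n -> R) : act X F z =
  \sum_(k < n) X (inl k) z * dcoord (inl k) F z +
  \sum_(k < n) X (inr k) z * dcoord (inr k) F z.
Proof. by rewrite /act big_sumType. Qed.

Lemma act_cst (X : vfield R n) (k : R) : act X (fun _ => k) z = 0.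
Proof.
by rewrite /act big1 // => -[] i _; rewrite /dcoord derive_cst mulr0.
Qed.

Definition frame_deriv_gbar (A B C : idx n) : R :=
  match A, B, C with inl i, inl j, inl m => dM i (c j m) z.1 | _, _, _ => 0 end.

Lemma act_frame_gbar A B C :
  act (frame Gam A) (gbar c B C) z = frame_deriv_gbar A B C.
Proof.
case: B => j; case: C => m; try by rewrite act_cst; case: A.
rewrite act_split.
under eq_bigr do rewrite [dcoord _ _ _]derive_fst.
under [X in _ + X]eq_bigr do rewrite [dcoord _ _ _]derive_fst_vertical mulr0.
rewrite [X in _ + X]big1 // addr0.
by case: A => i; rewrite ?sum_delta_l // big1 // => k; rewrite mul0r.
Qed.

Hypothesis Gam_derivable :
  forall a h j k, derivable (Gam a h j) z.1 (delta_mx 0 k).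

Lemma act_frame_vertical A B h :
  act (frame Gam A) (frame Gam B (inr h)) z =
  match A, B with
  | inl i, inl j => \sum_(a < n) z.2 0 a * dM i (Gam a h j) z.1
                    + \sum_(m < n) frame Gam (inl i) (inr m) z * Gam m h j z.1
  | inr i, inl j => Gam i h j z.1
  | _, inr _ => 0
  end.
Proof.
case: B => j; last by rewrite act_cst; case: A.
have -> : frame Gam (inl j) (inr h) = fibre_linear (fun a => Gam a h j) by [].
rewrite act_split.
under eq_bigr do rewrite [dcoord _ _ _]derive_fibre_linear_horizontal //.
under [X in _ + X]eq_bigr do rewrite [dcoord _ _ _]derive_fibre_linear_vertical.
case: A => i; rewrite /= ?sum_delta_l //.
by rewrite big1 ?add0r ?sum_delta_l // => k; rewrite mul0r.
Qed.

Hypothesis Gam_sym_near : forall h i j, \forall x \near z.1, Gam h i j x = Gam h j i x.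

Lemma Gam_sym h i j : Gam h i j z.1 = Gam h j i z.1.
Proof. exact: nbhs_singleton (Gam_sym_near h i j). Qed.

Lemma dGam_sym a h j k : dM k (Gam a h j) z.1 = dM k (Gam a j h) z.1.
Proof. exact: near_eq_derive (Gam_sym_near a h j). Qed.

Hypothesis c_sym_near : forall i j, \forall x \near z.1, c i j x = c j i x.

Lemma c_sym i j : c i j z.1 = c j i z.1.
Proof. exact: nbhs_singleton (c_sym_near i j). Qed.

Lemma dc_sym i j k : dM k (c i j) z.1 = dM k (c j i) z.1.
Proof. exact: near_eq_derive (c_sym_near i j). Qed.

Lemma gbar_sym A B : gbar c A B z = gbar c B A z.
Proof.
by case: A => i; case: B => j /=; [exact: c_sym | rewrite eq_sym | rewrite eq_sym |].
Qed.

(* The E_{bar h}-component of [E_A,E_B] + T~(E_A,E_B); its horizontal part vanishes. *)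
Definition vertical_bracket (A B : idx n) (h : 'I_n) : R :=
  match A, B with
  | inl i, inr j => - Gam j h i z.1
  | inr i, inl j => Gam i h j z.1
  | _, _ => 0
  end.

Lemma bracket_horizontal A B k : bracket (frame Gam A) (frame Gam B) (inl k) z = 0.
Proof.
have frame_inl D : frame Gam D (inl k) =
    fun=> match D with inl j => (j == k)%:R | inr _ => 0 end by case: D.
by rewrite /bracket !frame_inl !act_cst subrr.
Qed.

Lemma presc_torsion_horizontal A B k : presc_torsion Gam A B (inl k) z = 0.
Proof. by case: A => i; case: B => j //=; rewrite big1 // => r; rewrite mulr0. Qed.

Lemma bracket_add_presc_torsion A B h :
  bracket (frame Gam A) (frame Gam B) (inr h) z
  + presc_torsion Gam A B (inr h) z = vertical_bracket A B h.
Proof.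
rewrite /bracket !act_frame_vertical; case: A => i; case: B => j /=;
  rewrite ?addr0 ?sub0r ?subr0 ?oppr0 //.
rewrite /frame sum_delta_r.
have fibre_comp p q : \sum_(m < n) (\sum_(a < n) z.2 0 a * Gam a m p z.1) * Gam m h q z.1
    = \sum_(a < n) z.2 0 a * \sum_(m < n) Gam a m p z.1 * Gam m h q z.1.
  under eq_bigr do rewrite mulr_suml.
  rewrite exchange_big /=; apply: eq_bigr => a _.
  by rewrite mulr_sumr; apply: eq_bigr => m _; rewrite mulrA.
rewrite !fibre_comp.
suff -> : \sum_(s < n) z.2 0 s * curv Gam i j h s z.1 =
    \sum_(a < n) z.2 0 a * dM i (Gam a h j) z.1
  + \sum_(a < n) z.2 0 a * \sum_(m < n) Gam a m i z.1 * Gam m h j z.1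
  - \sum_(a < n) z.2 0 a * dM j (Gam a h i) z.1
  - \sum_(a < n) z.2 0 a * \sum_(m < n) Gam a m j z.1 * Gam m h i z.1 by lra.
rewrite -big_split -!sumrB; apply: eq_bigr => a _ /=.
rewrite /curv (dGam_sym a h j) (dGam_sym a h i).
have -> : \sum_(m < n) (Gam a i m z.1 * Gam m j h z.1 - Gam a j m z.1 * Gam m i h z.1)
  = \sum_(m < n) Gam a m i z.1 * Gam m h j z.1
    - \sum_(m < n) Gam a m j z.1 * Gam m h i z.1.
  rewrite -sumrB; apply: eq_bigr => m _.
  by rewrite (Gam_sym a i m) (Gam_sym m j h) (Gam_sym a j m) (Gam_sym m i h).
ring.
Qed.

Variable Ct : idx n -> idx n -> idx n -> pt R n -> R.

Lemma conn_vf_horizontal A B k : conn_vf Gam Ct A B (inl k) z = Ct A B (inl k) z.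
Proof.
rewrite /conn_vf big_sumType /= sum_delta_r big1 ?addr0 // => h _.
by rewrite mulr0.
Qed.

Lemma conn_vf_vertical A B h : conn_vf Gam Ct A B (inr h) z =
  \sum_(k < n) Ct A B (inl k) z * frame Gam (inl k) (inr h) z + Ct A B (inr h) z.
Proof. by rewrite /conn_vf big_sumType /= sum_delta_r. Qed.

Definition lowered_coef (A B C : idx n) : R :=
  \sum_(D : idx n) Ct A B D z * gbar c D C z.

Lemma lowered_coef_vertical A B m : lowered_coef A B (inr m) = Ct A B (inl m) z.
Proof.
rewrite /lowered_coef big_sumType /= sum_delta_r big1 ?addr0 // => k _.
by rewrite mulr0.
Qed.

Lemma lowered_coef_horizontal A B m : lowered_coef A B (inl m) =
  \sum_(k < n) Ct A B (inl k) z * c k m z.1 + Ct A B (inr m) z.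
Proof. by rewrite /lowered_coef big_sumType /= sum_delta_r. Qed.

Hypothesis torsion_at :
  forall A B K, torsion Gam Ct A B K z = presc_torsion Gam A B K z.

Lemma Ct_horizontal_sym A B k : Ct A B (inl k) z = Ct B A (inl k) z.
Proof.
apply/eqP; rewrite -subr_eq0; apply/eqP.
have := torsion_at A B (inl k).
by rewrite /torsion !conn_vf_horizontal bracket_horizontal presc_torsion_horizontal subr0.
Qed.

Lemma Ct_vertical_skew A B h :
  Ct A B (inr h) z - Ct B A (inr h) z = vertical_bracket A B h.
Proof.
rewrite -bracket_add_presc_torsion -torsion_at /torsion !conn_vf_vertical.
under [X in _ = _ + (_ - (X + _) - _)]eq_bigr do rewrite -Ct_horizontal_sym.
ring.
Qed.

Definition vertical_bracket_form (A B C : idx n) : R :=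
  match C with inl m => vertical_bracket A B m | inr _ => 0 end.

Lemma lowered_coef_skew A B C :
  lowered_coef A B C - lowered_coef B A C = vertical_bracket_form A B C.
Proof.
case: C => m /=; last by rewrite !lowered_coef_vertical Ct_horizontal_sym subrr.
rewrite !lowered_coef_horizontal -Ct_vertical_skew.
under [X in _ - (X + _) = _]eq_bigr do rewrite -Ct_horizontal_sym.
ring.
Qed.

Hypothesis metric_at : metric_compat Gam c Ct z.

Lemma lowered_coef_sym A B C :
  lowered_coef A B C + lowered_coef A C B = frame_deriv_gbar A B C.
Proof.
have := metric_at A B C; rewrite act_frame_gbar.
under [X in _ - _ - X = _]eq_bigr do rewrite gbar_sym.
rewrite -/(lowered_coef A B C) -/(lowered_coef A C B); lra.
Qed.

Lemma lowered_coef_koszul A B C : lowered_coef A B C =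
  2^-1 * (frame_deriv_gbar A B C + frame_deriv_gbar B A C - frame_deriv_gbar C B A
          + vertical_bracket_form A B C - vertical_bracket_form B C A
          + vertical_bracket_form C A B).
Proof.
by apply: koszul_formula; [rewrite pnatr_eq0 | exact: lowered_coef_sym | exact: lowered_coef_skew].
Qed.

Lemma Ct_horizontal A B m : Ct A B (inl m) z =
  match A, B with inl i, inl j => Gam m i j z.1 | _, _ => 0 end.
Proof.
rewrite -lowered_coef_vertical lowered_coef_koszul.
by case: A => i; case: B => j /=; have := Gam_sym m i j; lra.
Qed.

Lemma Ct_vertical A B h : Ct A B (inr h) z =
  match A, B with
  | inl i, inl j => 2^-1 * (nabla_c Gam c i j h z.1 + nabla_c Gam c j i h z.1
                            - nabla_c Gam c h i j z.1)
  | inl i, inr j => - Gam j i h z.1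
  | _, _ => 0
  end.
Proof.
have -> : Ct A B (inr h) z =
    lowered_coef A B (inl h) - \sum_(k < n) Ct A B (inl k) z * c k h z.1.
  by rewrite lowered_coef_horizontal; ring.
under eq_bigr do rewrite Ct_horizontal.
rewrite lowered_coef_koszul; case: A => i; case: B => j /=.
- rewrite nabla_c_koszul_combination ?(dc_sym j i); [lra | exact: Gam_sym | exact: c_sym].
- by rewrite big1 => [|k]; [have := Gam_sym j h i | rewrite mul0r]; lra.
- by rewrite big1 => [|k]; [have := Gam_sym i h j | rewrite mul0r]; lra.
- by rewrite big1 => [|k]; [lra | rewrite mul0r].
Qed.

End AdaptedFrame.

Theorem proposition2 (R : realType) (n : nat) (U : set 'rV[R]_n)
  (Gam : 'I_n -> 'I_n -> 'I_n -> 'rV[R]_n -> R)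
  (c : 'I_n -> 'I_n -> 'rV[R]_n -> R)
  (Ct : idx n -> idx n -> idx n -> pt R n -> R) :
  open U ->
  (forall h i j, smooth_on (Gam h i j) U) ->
  (forall h i j x, U x -> Gam h i j x = Gam h j i x) ->
  (forall i j, smooth_on (c i j) U) ->
  (forall i j x, U x -> c i j x = c j i x) ->
  (forall A B D, smooth_on (Ct A B D) [set z | U z.1]) ->
  (forall z, U z.1 -> metric_compat Gam c Ct z) ->
  (forall A B K z, U z.1 -> torsion Gam Ct A B K z = presc_torsion Gam A B K z) ->
  forall z : pt R n, U z.1 ->
  forall i j : 'I_n,
    (forall K, Ct (inr i) (inr j) K z = 0) /\
    (forall K, Ct (inr i) (inl j) K z = 0) /\
    (forall K, Ct (inl i) (inr j) K z =
       match K with inl _ => 0 | inr h => - Gam j i h z.1 end) /\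
    (forall K, Ct (inl i) (inl j) K z =
       match K with
       | inl h => Gam h i j z.1
       | inr h => 2^-1 * (nabla_c Gam c i j h z.1 + nabla_c Gam c j i h z.1
                          - nabla_c Gam c h i j z.1)
       end).
Proof.
move=> U_open Gam_smooth Gam_symU _ c_symU _ metric torsion z Uz i j.
have U_near : \forall x \near z.1, U x := open_nbhs_nbhs (conj U_open Uz).
have Gam_derivable a h j' k : derivable (Gam a h j') z.1 (delta_mx 0 k).
  by apply: diff_derivable; exact: (Gam_smooth a h j' 0%N z.1 Uz).
have Gam_sym_near h i' j' : \forall x \near z.1, Gam h i' j' x = Gam h j' i' x.
  by apply: filterS U_near => x; exact: Gam_symU.
have c_sym_near i' j' : \forall x \near z.1, c i' j' x = c j' i' x.
  by apply: filterS U_near => x; exact: c_symU.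
have torsion_at A B K := torsion A B K z Uz.
have metric_at := metric z Uz.
by split; [|split; [|split]] => -[] m;
  rewrite ?(Ct_horizontal Gam_derivable Gam_sym_near c_sym_near torsion_at metric_at)
          ?(Ct_vertical Gam_derivable Gam_sym_near c_sym_near torsion_at metric_at).
Qed.
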